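(* Let $f:\mathbb{R}^n\to\mathbb{R}^m$ be an asymptotically affine function. For any $\epsilon>0$ there exist a compact set $K\subset\mathbb{R}^n$ and a function $F:\mathbb{R}^n\to\mathbb{R}^m$ such that: (1) $F$ is the feedforward function of a radial neural network whose hidden widths are $(n+1,n+2,\dots,n+N)$, i.e. whose widths vector is $(n,n+1,\dots,n+N,m)$, where $N=N(f,K,\epsilon)$; (2) $|F(x)-f(x)|<\epsilon$ for every $x\in\mathbb{R}^n$.
   Context: For $c\in\mathbb{R}^n$ and $r>0$, $B_r(c)=\{x\in\mathbb{R}^n: |x-c|<r\}$. An affine map $\mathbb{R}^n\to\mathbb{R}^m$ is one of the form $x\mapsto Ax+b$. A continuous $f:\mathbb{R}^n\to\mathbb{R}^m$ is asymptotically affine if there is an affine map $L:\mathbb{R}^n\to\mathbb{R}^m$ such that for every $\epsilon>0$ there is a compact $K\subset\mathbb{R}^n$ with $|L(x)-f(x)|<\epsilon$ for all $x\in\mathbb{R}^n\setminus K$. For a compact $K\subset\mathbb{R}^n$, a continuous $f$ defined on $K$ (or on $\mathbb{R}^n$, in which case one uses its restriction to $K$) and $\epsilon>0$, $N(f,K,\epsilon)$ denotes the minimal $N$ such that there exist $c_1,\dots,c_N\in K$ and $r_1,\dots,r_N\in(0,1)$ with $K\subseteq\bigcup_i B_{r_i}(c_i)$ and $f(B_{r_i}(c_i)\cap K)\subseteq B_\epsilon(f(c_i))$ for all $i$. For a function $h:\mathbb{R}\to\mathbb{R}$ and $n\ge1$, $h^{(n)}:\mathbb{R}^n\to\mathbb{R}^n$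 is $h^{(n)}(v)=h(|v|)\,v/|v|$ for $v\neq0$ and $h^{(n)}(0)=0$; a radial rescaling function on $\mathbb{R}^n$ is a map of the form $h^{(n)}$ with $h$ piecewise differentiable. A radial neural network with widths vector $(n_0,\dots,n_L)$ consists of weights $W_i\in\mathbb{R}^{n_i\times n_{i-1}}$, biases $b_i\in\mathbb{R}^{n_i}$ and radial rescaling functions $\rho_i:\mathbb{R}^{n_i}\to\mathbb{R}^{n_i}$, $i=1,\dots,L$; its hidden widths are $(n_1,\dots,n_{L-1})$. Its feedforward function is $F=F_L$ where $F_0=\mathrm{id}_{\mathbb{R}^{n_0}}$ and $F_i(x)=\rho_i(W_iF_{i-1}(x)+b_i)$. *)

From HB Require Import structures.
From mathcomp Require Import all_boot all_order all_algebra.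
From mathcomp Require Import all_classical all_reals all_analysis.
Set Implicit Arguments. Unset Strict Implicit. Unset Printing Implicit Defensive.
Import Order.TTheory GRing.Theory Num.Theory.
Import numFieldNormedType.Exports.
Local Open Scope classical_set_scope.
Local Open Scope ring_scope.

Section Defs.
Variable R : realType.

Definition enorm (n : nat) (v : 'cV[R]_n) : R :=
  Num.sqrt (\sum_(i < n) v i 0 ^+ 2).

Definition eball (n : nat) (c : 'cV[R]_n) (r : R) : set 'cV[R]_n :=
  [set x | enorm (x - c) < r].

Definition affine_map (n m : nat) (L : 'cV[R]_n -> 'cV[R]_m) : Prop :=
  exists (A : 'M[R]_(m, n)) (b : 'cV[R]_m), forall x, L x = A *m x + b.

Definition asymptotically_affine (n m : nat) (f : 'cV[R]_n -> 'cV[R]_m) : Prop :=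
  continuous f /\
  exists L : 'cV[R]_n -> 'cV[R]_m, affine_map L /\
    forall eps : R, 0 < eps -> exists K : set 'cV[R]_n, compact K /\
      forall x, ~ K x -> enorm (L x - f x) < eps.

Definition good_cover (n m : nat) (f : 'cV[R]_n -> 'cV[R]_m)
  (K : set 'cV[R]_n) (eps : R) (N : nat) : Prop :=
  exists (c : 'I_N -> 'cV[R]_n) (r : 'I_N -> R),
    (forall i, K (c i) /\ 0 < r i < 1) /\
    (forall x, K x -> exists i, eball (c i) (r i) x) /\
    (forall i x, K x -> eball (c i) (r i) x -> eball (f (c i)) eps (f x)).

Definition is_Ncover (n m : nat) (f : 'cV[R]_n -> 'cV[R]_m)
  (K : set 'cV[R]_n) (eps : R) (N : nat) : Prop :=
  good_cover f K eps N /\ forall M, good_cover f K eps M -> (N <= M)%N.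

Definition piecewise_differentiable (h : R -> R) : Prop :=
  exists s : seq R, forall t, t \notin s -> derivable h t 1.

Definition radial (n : nat) (h : R -> R) (v : 'cV[R]_n) : 'cV[R]_n :=
  if v == 0 then 0 else (h (enorm v) / enorm v) *: v.

Inductive radnet : nat -> nat -> Type :=
| RNil (n : nat) : radnet n n
| RCons (n k m : nat) (W : 'M[R]_(k, n)) (b : 'cV[R]_k) (h : R -> R)
    (rest : radnet k m) : radnet n m.

Fixpoint widths (n m : nat) (N : radnet n m) : seq nat :=
  match N with
  | RNil n => [:: n]
  | @RCons n _ _ _ _ _ rest => n :: widths rest
  end.

Fixpoint radnet_ok (n m : nat) (N : radnet n m) : Prop :=
  match N with
  | RNil _ => True
  | RCons _ _ _ _ _ h rest => piecewise_differentiable h /\ radnet_ok rest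
  end.

Fixpoint feedforward (n m : nat) (N : radnet n m) : 'cV[R]_n -> 'cV[R]_m :=
  match N in radnet n m return 'cV[R]_n -> 'cV[R]_m with
  | RNil _ => fun x => x
  | RCons _ _ _ W b h rest => fun x => feedforward rest (radial h (W *m x + b))
  end.

End Defs.

From HB Require Import structures.
From mathcomp Require Import all_boot all_order all_algebra.
From mathcomp Require Import all_classical all_reals all_analysis.
From mathcomp Require Import ring lra zify.
Set Implicit Arguments. Unset Strict Implicit. Unset Printing Implicit Defensive.
Import Order.TTheory GRing.Theory Num.Theory.
Import numFieldNormedType.Exports.
Local Open Scope classical_set_scope.
Local Open Scope ring_scope.

(** The affine map [L] is already [eps]-close to [f] outside a compact set
   [K0], so the network only has to correct [f] on a box [K] around [K0].
   Cover [K] by [N = N(f, K, eps)] balls [B_(r_q)(c_q)] on which [f] varies by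
   less than [eps], and test one ball per hidden layer.  The state passed
   between layers holds the position relative to the current centre, a status
   coordinate equal to [1] until [x] is captured by a ball, and one coordinate
   per finished layer that becomes [2] once [x] has been captured.  While [x]
   is free the state has norm [sqrt (|x - c_q|^2 + 1)], which is below
   [sqrt (r_q^2 + 1)] exactly when [x] lies in the [q]-th ball: the radial
   activation of layer [q] then kills the whole vector, which records the
   capture, and from then on a coordinate [2] keeps the norm above every later
   threshold.  The output layer reads the capturing ball off the jumps of the
   capture coordinates and returns [f (c_q)], or [L x] if [x] was never
   captured.  Balls whose centres lie within distance [1] of the boundary of
   the box are switched off, so that captured points lie in [K] while points
   of [K0] are always captured. *)

Section EuclideanNorm.
Variable R : realType.
Implicit Types (d : nat) (rho : R).

Lemma enorm_ge0 d (v : 'cV[R]_d) : 0 <= enorm v.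
Proof. exact: sqrtr_ge0. Qed.

Lemma enormB d (u v : 'cV[R]_d) : enorm (u - v) = enorm (v - u).
Proof.
rewrite /enorm; congr Num.sqrt; apply: eq_bigr => i _.
by rewrite -opprB mxE sqrrN.
Qed.

Lemma ler_coord_enorm d (v : 'cV[R]_d) i : `|v i 0| <= enorm v.
Proof.
rewrite /enorm -sqrtr_sqr ler_sqrt ?sumr_ge0 // => [|j _]; last exact: sqr_ge0.
by rewrite (bigD1 i) //= lerDl sumr_ge0 // => j _; exact: sqr_ge0.
Qed.

Lemma enorm_gt0 d (v : 'cV[R]_d) : v != 0 -> 0 < enorm v.
Proof.
move=> v_neq0; rewrite lt_neqAle enorm_ge0 andbT eq_sym /enorm sqrtr_eq0.
apply: contra v_neq0 => sum_le0; apply/eqP/matrixP => i j; rewrite (ord1 j) mxE.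
apply/eqP; rewrite -sqrf_eq0 eq_le sqr_ge0 andbT; apply: le_trans sum_le0.
by rewrite (bigD1 i) //= lerDl sumr_ge0 // => k _; exact: sqr_ge0.
Qed.

Lemma enorm_lt_coord d (v : 'cV[R]_d) e : 0 < e ->
  (forall i, `|v i 0| < e / (d%:R + 1)) -> enorm v < e.
Proof.
move=> e_gt0 v_small; set t := e / (d%:R + 1).
have d1_gt0 : 0 < d%:R + 1 :> R by rewrite ltr_wpDl.
have t_gt0 : 0 < t by rewrite divr_gt0.
have eE : e = t * (d%:R + 1) by rewrite /t divfK // gt_eqF.
rewrite /enorm -(ger0_norm (ltW e_gt0)) -sqrtr_sqr ltr_sqrt ?exprn_gt0 //.
apply: (@le_lt_trans _ _ (\sum_(i < d) t ^+ 2)).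
  apply: ler_sum => i _; rewrite -real_normK ?num_real //.
  by rewrite lerXn2r // ?nnegrE ?ltW.
have d_ge0 : 0 <= d%:R :> R by [].
rewrite sumr_const card_ord eE -mulr_natr; nra.
Qed.

Lemma coord_ltD1 d (u v : 'cV[R]_d) i :
  enorm (u - v) < 1 -> `|u i 0| < `|v i 0| + 1.
Proof.
move=> uv_lt1; have := ler_coord_enorm (u - v) i; rewrite !mxE => uv_i.
have := ler_normD (v i 0) (u i 0 - v i 0); rewrite addrC subrK; lra.
Qed.

Lemma ler_coord_mx_norm p q (x : 'M[R]_(p, q)) i j : `|x i j| <= `|x|.
Proof.
rewrite [leRHS]/Num.Def.normr /= mx_normrE.
by apply/bigmax_geP; right; exists (i, j).
Qed.

Lemma trmx_continuous p q : continuous (@trmx R p q).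
Proof.
move=> M s /= /(nbhs_ballP (M^T)) [e e_gt0 es].
apply/nbhs_ballP; exists e => //= M' [_ MM']; apply: es; split => // i j.
by rewrite !mxE; exact: MM'.
Qed.

Definition box d rho : set 'cV[R]_d := [set x | forall i, `|x i 0| <= rho].
Arguments box : clear implicits.

Lemma box_compact d rho : compact (box d rho).
Proof.
have -> : box d rho =
    (@trmx R 1 d) @` [set v : 'rV[R]_d | forall i, `[-rho, rho]%classic (v ord0 i)].
  apply/seteqP; split => x /=.
    move=> x_box; exists x^T; last by rewrite trmxK.
    by move=> i; rewrite mxE /= in_itv /= -ler_norml.
  move=> [v v_box <-] i; rewrite mxE ler_norml; have := v_box i; rewrite /= in_itv /=.
  by rewrite (ord1 0).
apply: continuous_compact; first exact/continuous_subspaceT/trmx_continuous.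
apply: (@rV_compact _ _ (fun=> `[-rho, rho]%classic)) => i.
exact: segment_compact.
Qed.

End EuclideanNorm.
Arguments box {R} d rho.
Arguments box_compact {R} d rho.

Section ContinuousCover.
Variables (R : realType) (n m : nat) (f : 'cV[R]_n -> 'cV[R]_m).
Hypothesis f_cont : continuous f.

Lemma continuous_enorm_ball c eps : 0 < eps -> exists r, 0 < r < 1 /\
  forall x, enorm (x - c) < r -> enorm (f x - f c) < eps.
Proof.
move=> eps_gt0.
have m1_gt0 : 0 < m%:R + 1 :> R by rewrite ltr_wpDl.
have : nbhs (f c) (ball (f c) (eps / (m%:R + 1))).
  by apply: nbhsx_ballx; rewrite divr_gt0.
move=> /f_cont /nbhs_ballP [d d_gt0 fd].
have {}d_gt0 : 0 < d by [].
exists (d / (1 + d)); split.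
  by rewrite divr_gt0 ?ltr_pdivrMr //=; lra.
move=> x xc; apply: enorm_lt_coord => // i.
have : ball c d x.
  split => // j k; rewrite (ord1 k) /ball /= -normrN opprB.
  have := ler_coord_enorm (x - c) j; rewrite !mxE => xc_j.
  apply: (le_lt_trans xc_j); apply: (lt_trans xc).
  rewrite ltr_pdivrMr; nra.
by move=> /fd [_ /(_ i 0)]; rewrite /ball /= -normrN opprB !mxE.
Qed.

Lemma good_cover_exists K eps : compact K -> 0 < eps ->
  exists N, good_cover f K eps N.
Proof.
move=> cK eps_gt0.
have /choice [rf rfP] := fun c => continuous_enorm_ball c eps_gt0.
have n1_gt0 : 0 < n%:R + 1 :> R by rewrite ltr_wpDl.
have rf_gt0 c : 0 < rf c / (n%:R + 1).
  by have [/andP[rc_gt0 _] _] := rfP c; rewrite divr_gt0.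
move: cK; rewrite compact_cover => /(_ _ K (fun c => ball c (rf c / (n%:R + 1)))).
case=> [c _|x Kx|D DK Dcover]; first exact: ball_open.
  by exists x => //; exact: ballxx.
set s := finmap.enum_fset D.
exists (size s), (fun i => nth 0 s i), (fun i => rf (nth 0 s i)); split; [|split].
- move=> i; split; last by have [] := rfP (nth 0 s i).
  by have := DK (nth 0 s i) (mem_nth 0 (ltn_ord i)); rewrite inE.
- move=> x /Dcover [c /= cD xc].
  have cs : (index c s < size s)%N by rewrite index_mem.
  exists (Ordinal cs); rewrite /eball /= nth_index //.
  apply: enorm_lt_coord; first by have [/andP[]] := rfP c.
  by move=> i; move: xc => [_ /(_ i 0)]; rewrite /ball /= !mxE -normrN opprB.
- move=> i x _; rewrite /eball /= => /(proj2 (rfP _)).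
  by rewrite enormB.
Qed.

Lemma is_Ncover_exists K eps : compact K -> 0 < eps ->
  exists N, is_Ncover f K eps N.
Proof.
move=> cK eps_gt0; have exN : exists N, `[< good_cover f K eps N >].
  by have [N fN] := good_cover_exists cK eps_gt0; exists N; apply/asboolP.
case: (ex_minnP exN) => N /asboolP fN Nmin.
by exists N; split => // M /asboolP /Nmin.
Qed.

End ContinuousCover.

Section AffineLayers.
Variable R : realType.
Implicit Types (d e p : nat).

Definition affine_fun d e (T : 'cV[R]_d -> 'cV[R]_e) : Prop :=
  forall a u v, T (a *: u + v) = a *: (T u - T 0) + T v.

Definition affine_mx d e (T : 'cV[R]_d -> 'cV[R]_e) : 'M[R]_(e, d) :=
  \matrix_(i, j) (T (delta_mx j 0) - T 0) i 0.

Lemma affine_mxE d e (T : 'cV[R]_d -> 'cV[R]_e) :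
  affine_fun T -> forall y, T y = affine_mx T *m y + T 0.
Proof.
move=> T_aff y; pose T0 u := T u - T 0.
have T0D u v : T0 (u + v) = T0 u + T0 v.
  by rewrite /T0 -[u]scale1r T_aff !scale1r addrA.
have T0Z a u : T0 (a *: u) = a *: T0 u.
  by rewrite /T0 -[a *: u]addr0 T_aff addrK.
have T0y : T0 y = \sum_(j < d) y j 0 *: T0 (delta_mx j 0).
  rewrite {1}(matrix_sum_delta y) (eq_bigr _ (fun j _ => big_ord1 _ _)).
  elim/big_rec2: _ => [|j s1 s2 _ <-]; first by rewrite /T0 subrr.
  by rewrite T0D T0Z.
apply/eqP; rewrite -subr_eq; apply/eqP; rewrite -/(T0 y) T0y.
apply/matrixP => i k; rewrite (ord1 k) !mxE summxE; apply: eq_bigr => j _.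
by rewrite !mxE mulrC.
Qed.

Definition affine_layer d e p (T : 'cV[R]_d -> 'cV[R]_e) (h : R -> R)
  (rest : radnet R e p) : radnet R d p :=
  RCons (affine_mx T) (T 0) h rest.

Lemma feedforward_affine_layer d e p (T : 'cV[R]_d -> 'cV[R]_e) h
    (rest : radnet R e p) y :
  affine_fun T -> feedforward (affine_layer T h rest) y = feedforward rest (radial h (T y)).
Proof. by move=> T_aff; rewrite /= -affine_mxE. Qed.

End AffineLayers.

Section RadialCutoff.
Variable R : realType.

Lemma radial_id d (v : 'cV[R]_d) : radial id v = v.
Proof.
rewrite /radial; case: eqVneq => [->//|v_neq0].
by rewrite divff ?gt_eqF ?enorm_gt0 // scale1r.
Qed.

Definition cutoff (on : bool) (T t : R) : R := if on && (t < T) then 0 else t.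

Lemma radial_cutoff d on T (v : 'cV[R]_d) :
  radial (cutoff on T) v = if on && (enorm v < T) then 0 else v.
Proof.
rewrite /radial /cutoff; case: eqVneq => [->|v_neq0]; first by case: ifP.
case: ifP => _; first by rewrite mul0r scale0r.
by rewrite divff ?gt_eqF ?enorm_gt0 // scale1r.
Qed.

Lemma piecewise_differentiable_id : piecewise_differentiable (@id R).
Proof. by exists [::] => t _; exact: derivable_id. Qed.

Lemma piecewise_differentiable_cutoff on T :
  piecewise_differentiable (cutoff on T).
Proof.
exists [:: T] => t; rewrite inE => t_neqT; rewrite /cutoff.
case: on => /=; last first.
  by apply: (near_eq_derivable (f := id)); [near=> s | exact: derivable_id].
case: (ltgtP t T) => [tT|Tt|tT]; last by rewrite tT eqxx in t_neqT.
  apply: (near_eq_derivable (f := cst 0)); last exact: derivable_cst.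
  by near=> s; rewrite ifT //; near: s; exact: lt_nbhsl.
apply: (near_eq_derivable (f := id)); last exact: derivable_id.
near=> s; rewrite ifF //; apply/negbTE; rewrite -leNgt; apply/ltW; near: s.
exact: lt_nbhsr.
Unshelve. all: by end_near.
Qed.

End RadialCutoff.

Section Coordinates.
Variable R : realType.
Implicit Types (d : nat) (g : nat -> R).

(* Padding with [0] beyond the dimension lets all layers be written as maps on
   [nat -> R]. *)
Definition coord d (y : 'cV[R]_d) (i : nat) : R :=
  oapp (fun o : 'I_d => y o 0) 0 (insub i).

Definition colv d g : 'cV[R]_d := \col_(i < d) g i.

Lemma coordE d (y : 'cV[R]_d) (i : 'I_d) : coord y i = y i 0.
Proof. by rewrite /coord valK. Qed.

Lemma coord_colv d g i : (i < d)%N -> coord (colv d g) i = g i.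
Proof. by move=> i_lt_d; rewrite /coord insubT /= mxE. Qed.

Lemma coord0 d : coord (0 : 'cV[R]_d) = fun=> 0.
Proof.
by apply: funext => i; rewrite /coord; case: insubP => [j _ _ | _] //=; rewrite mxE.
Qed.

Lemma coordD d a (u v : 'cV[R]_d) :
  coord (a *: u + v) = fun i => a * coord u i + coord v i.
Proof.
apply: funext => i; rewrite /coord; case: insubP => [j _ _ | _] /=; first by rewrite !mxE.
by rewrite mulr0 addr0.
Qed.


End Coordinates.

Section Network.
Variables (R : realType) (n m N : nat).
Variables (c : 'I_N -> 'cV[R]_n) (r : 'I_N -> R).
Variables (A : 'M[R]_(m, n)) (b : 'cV[R]_m) (f : 'cV[R]_n -> 'cV[R]_m) (rho : R).
Implicit Types (x xt : 'cV[R]_n) (g P : nat -> R) (k cls : nat).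

(* Balls are numbered from [1]; index [0] and indices beyond [N] get the junk
   centre [0] and radius [0].  [center N.+1 = 0] lets the output layer undo
   the last translation. *)
Definition center k : 'cV[R]_n := if k is j.+1 then oapp c 0 (insub j) else 0.
Definition radius k : R := if k is j.+1 then oapp r 0 (insub j) else 0.

Lemma center_ord (q : 'I_N) : center q.+1 = c q.
Proof. by rewrite /= valK. Qed.

Lemma radius_ord (q : 'I_N) : radius q.+1 = r q.
Proof. by rewrite /= valK. Qed.

Lemma center_out : center N.+1 = 0.
Proof. by rewrite /= insubF // ltnn. Qed.

Definition inner k : bool := [forall i, `|center k i 0| < rho - 1].

Fixpoint captured x k : nat :=
  if k is j.+1 then
    if captured x j != 0 then captured x j
    else if inner k && (enorm (x - center k) < radius k) then k else 0
  else 0.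

Definition anchor x k : 'cV[R]_n :=
  if captured x k == 0 then x else center (captured x k).

(* Coordinates [0 .. n-1] hold [xt - center k], where the anchor [xt] is [x]
   while [x] is free and the centre of the capturing ball [cls] afterwards;
   coordinate [n] is the status ([1] iff [cls = 0]) and coordinate [n + j] is
   [2] iff [0 < cls <= j]. *)
Definition state k xt cls (i : nat) : R :=
  if (i < n)%N then coord xt i - coord (center k) i
  else if i == n then (if cls == 0 then 1 else 0)
  else if (cls != 0) && (cls <= i - n)%N then 2 else 0.

(* The input of layer [0] has no status coordinate: it is implicitly [1]. *)
Definition pre_layer k g (i : nat) : R :=
  let free := if k == 0 then 1 else g n in
  if (i < n)%N then g i + coord (center k) i - coord (center k.+1) i
  else if i == n then free
  else if (i < n + k)%N then g i
  else 2 - 2 * free.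

Lemma captured_le x k : (captured x k <= k)%N.
Proof. by elim: k => //= k IH; case: ifP => _; [exact: leqW | case: ifP]. Qed.

Lemma captured_eq0 x k : captured x k = 0 -> forall j, (0 < j <= k)%N ->
  ~~ (inner j && (enorm (x - center j) < radius j)).
Proof.
elim: k => [_ j|k IH] /=; first by lia.
case: (eqVneq (captured x k) 0) => [x_free|x_capt] /=; last first.
  by move=> /eqP; rewrite (negbTE x_capt).
case: ifP => // x_out _ j j_range.
have [->|j_neq] := eqVneq j k.+1; first by rewrite x_out.
by apply: IH => //; lia.
Qed.

Lemma captured_neq0 x k : captured x k != 0 ->
  inner (captured x k) /\ enorm (x - center (captured x k)) < radius (captured x k).
Proof.
elim: k => //= k IH.
by case: (eqVneq (captured x k) 0) => [_|/IH//] /=; case: ifP => // /andP.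
Qed.

Lemma colv_state k xt cls : colv n (state k xt cls) = xt - center k.
Proof. by apply/matrixP => i j; rewrite (ord1 j) !mxE /state ltn_ord !coordE. Qed.

Lemma pre_layer_state k xt cls i : (cls <= k)%N ->
  pre_layer k (state k xt cls) i = state k.+1 xt cls i.
Proof.
move=> cls_le_k; rewrite /pre_layer /state.
have [i_lt_n|i_ge_n] := ltnP i n; first by rewrite addrNK.
rewrite ltnn eqxx; case: eqP => [//|i_neq_n].
  by case: eqP => // k0; move: cls_le_k; rewrite k0 leqn0 => /eqP->.
have [//|i_ge_nk] := ltnP i (n + k).
case: (eqVneq k 0) => [k0|k_neq0].
  by move: cls_le_k; rewrite k0 leqn0 => /eqP-> /=; lra.
have -> : (cls <= i - n)%N by lia.
by case: (cls == 0) => /=; lra.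
Qed.

Lemma pre_layer_colv k g : pre_layer k (coord (colv (k + n) g)) = pre_layer k g.
Proof.
apply: funext => i; rewrite /pre_layer.
have coord_g j : (j < k + n)%N -> coord (colv (k + n) g) j = g j.
  exact: coord_colv.
case: ifP => i_lt_n; first by rewrite coord_g //; lia.
have -> : (if k == 0 then 1 else coord (colv (k + n) g) n) =
    (if k == 0 then 1 else g n).
  by case: eqVneq => // k_neq0; rewrite coord_g //; lia.
by case: ifP => //; case: ifP => // i_lt_nk _; rewrite coord_g //; lia.
Qed.

Lemma pre_layer_affine k a g1 g2 i :
  pre_layer k (fun j => a * g1 j + g2 j) i =
  a * (pre_layer k g1 i - pre_layer k (fun=> 0) i) + pre_layer k g2 i.
Proof.
by rewrite /pre_layer; case: (k == 0); do 3?[case: ifP => _]; ring.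
Qed.

Definition hidden_map d k (y : 'cV[R]_d) : 'cV[R]_d.+1 :=
  colv d.+1 (pre_layer k (coord y)).

Lemma hidden_map_affine d k : affine_fun (@hidden_map d k).
Proof.
move=> a u v; apply/matrixP => i j.
by rewrite !mxE coordD coord0 pre_layer_affine.
Qed.

Lemma hidden_map_state k xt cls : (cls <= k)%N ->
  hidden_map k (colv (k + n) (state k xt cls)) = colv (k.+1 + n) (state k.+1 xt cls).
Proof.
move=> cls_le_k; rewrite /hidden_map pre_layer_colv.
by apply/matrixP => i j; rewrite !mxE pre_layer_state.
Qed.

Lemma enorm_state_free k xt : enorm (colv (k.+1 + n) (state k.+1 xt 0)) =
  Num.sqrt (enorm (xt - center k.+1) ^+ 2 + 1).
Proof.
rewrite [in RHS]/enorm sqr_sqrtr; last by apply: sumr_ge0 => i _; exact: sqr_ge0.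
rewrite /enorm; congr Num.sqrt.
rewrite (eq_bigr (fun i : 'I_(k.+1 + n) => state k.+1 xt 0 i ^+ 2)); last first.
  by move=> i _; rewrite mxE.
rewrite -(big_mkord xpredT (fun i => state k.+1 xt 0 i ^+ 2)).
rewrite (big_cat_nat (n := n)) //=; last by rewrite leq_addl.
rewrite big_mkord; congr (_ + _).
  by apply: eq_bigr => i _; rewrite /state ltn_ord !mxE !coordE.
rewrite big_ltn; last by rewrite addSnnS ltn_addl.
rewrite {1}/state ltnn eqxx /= expr1n big_nat_cond big1 ?addr0 // => i.
move=> /andP[/andP[n_lt_i _] _]; rewrite /state ifF; last by lia.
by rewrite ifF ?expr0n //; lia.
Qed.

Lemma enorm_state_captured k xt cls : cls != 0 -> (cls <= k)%N ->
  2 <= enorm (colv (k.+1 + n) (state k.+1 xt cls)).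
Proof.
move=> cls_neq0 cls_le_k; have i_lt : (n + cls < k.+1 + n)%N by lia.
apply: le_trans (ler_coord_enorm _ (Ordinal i_lt)); rewrite mxE /state /=.
rewrite ifF; last by lia.
by rewrite ifF ?cls_neq0 ?addKn ?leqnn ?ger0_norm //; lia.
Qed.

Lemma colv_state_capture k : colv (k.+1 + n) (state k.+1 (center k.+1) k.+1) = 0.
Proof.
apply/matrixP => i j; rewrite !mxE /state subrr.
case: ifP => // _; case: ifP => // _; rewrite ifF //.
by apply/negbTE; rewrite negb_and -ltnNge; have := ltn_ord i; lia.
Qed.

Hypothesis r_range : forall q, 0 < r q < 1.

Lemma radius_range k : 0 <= radius k < 1.
Proof.
case: k => [|j] /=; first lra.
case: insubP => [q _ _|_] /=; last lra.
by have /andP[r_gt0 ->] := r_range q; rewrite ltW.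
Qed.

Definition threshold k : R := Num.sqrt (radius k ^+ 2 + 1).

Lemma threshold_lt2 k : threshold k < 2.
Proof.
have /andP[r_ge0 r_lt1] := radius_range k.
have -> : 2 = Num.sqrt (2 ^+ 2) :> R by rewrite sqrtr_sqr ger0_norm.
rewrite /threshold ltr_sqrt; nra.
Qed.

Lemma lt_threshold k e : 0 <= e ->
  (Num.sqrt (e ^+ 2 + 1) < threshold k) = (e < radius k).
Proof.
have /andP[r_ge0 _] := radius_range k.
move=> e_ge0; rewrite /threshold ltr_sqrt ?ltrD2r ?ltr_sqr ?nnegrE //.
by rewrite ltr_wpDl ?sqr_ge0.
Qed.

Lemma cutoff_state x k :
  radial (cutoff (inner k.+1) (threshold k.+1))
    (colv (k.+1 + n) (state k.+1 (anchor x k) (captured x k))) =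
  colv (k.+1 + n) (state k.+1 (anchor x k.+1) (captured x k.+1)).
Proof.
rewrite radial_cutoff /anchor /=.
case: (eqVneq (captured x k) 0) => [x_free|x_capt] /=.
  rewrite x_free enorm_state_free lt_threshold ?enorm_ge0 //.
  by case: ifP => _; rewrite ?colv_state_capture ?eqxx.
rewrite ifF ?(negbTE x_capt) //; apply/negbTE; rewrite negb_and -leNgt orbC.
apply/orP; left; apply/ltW/(lt_le_trans (threshold_lt2 _)).
exact: enorm_state_captured (captured_le x k).
Qed.

Definition jump (q : 'I_N) : 'cV[R]_m := f (c q) - (A *m c q + b).
Definition jump_mx : 'M[R]_(m, N) := \matrix_(i, q) jump q i 0.
Definition flag P j : R := if j == 0 then 0 else P (n + j)%N.
Definition flag_jump P j : R := (flag P j.+1 - flag P j) / 2.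
Definition readout P : 'cV[R]_m :=
  A *m colv n P + jump_mx *m colv N (flag_jump P) + b.

Lemma readout_affine a P0 P1 P2 :
  readout (fun i => a * (P1 i - P0 i) + P2 i) =
  a *: (readout P1 - readout P0) + readout P2.
Proof.
have colv_comb d (g0 g1 g2 : nat -> R) :
    colv d (fun i => a * (g1 i - g0 i) + g2 i) =
    a *: (colv d g1 - colv d g0) + colv d g2.
  by apply/matrixP => i j; rewrite !mxE.
rewrite /readout.
have -> : flag_jump (fun i => a * (P1 i - P0 i) + P2 i) =
    (fun j => a * (flag_jump P1 j - flag_jump P0 j) + flag_jump P2 j).
  by apply: funext => j; rewrite /flag_jump /flag /=; case: (j == 0); ring.
rewrite !colv_comb !mulmxDr -!scalemxAr !mulmxBr.
by apply/matrixP => i j; rewrite !mxE; ring.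
Qed.

Definition out_map d (y : 'cV[R]_d) : 'cV[R]_m := readout (pre_layer N (coord y)).

Lemma out_map_affine d : affine_fun (@out_map d).
Proof.
move=> a u v; rewrite /out_map coordD coord0 -readout_affine.
by congr readout; apply: funext => i; exact: pre_layer_affine.
Qed.

Lemma out_map_state xt cls : (cls <= N)%N ->
  out_map (colv (N + n) (state N xt cls)) = readout (state N.+1 xt cls).
Proof.
move=> cls_le_N; rewrite /out_map pre_layer_colv.
by congr readout; apply: funext => i; exact: pre_layer_state.
Qed.

Lemma flag_state k xt cls j :
  flag (state k xt cls) j = if (cls != 0) && (cls <= j)%N then 2 else 0.
Proof.
rewrite /flag /state; case: j => [|j] /=; first by case: cls.
rewrite ifF; last by lia.
by rewrite ifF ?addKn //; lia.
Qed.

Lemma flag_jump_state k xt cls j :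
  flag_jump (state k xt cls) j = if cls == j.+1 then 1 else 0.
Proof.
rewrite /flag_jump !flag_state.
case: (eqVneq cls 0) => [->|cls_neq0] /=; first by rewrite subrr mul0r.
have [cls_le_j|j_lt_cls] := leqP cls j.
  by rewrite (leqW cls_le_j) ifF ?subrr ?mul0r //; lia.
rewrite eqn_leq j_lt_cls andbT.
by case: ifP => _; lra.
Qed.

Lemma readout_free xt : readout (state N.+1 xt 0) = A *m xt + b.
Proof.
rewrite /readout; have -> : colv N (flag_jump (state N.+1 xt 0)) = 0.
  by apply/matrixP => i j; rewrite !mxE flag_jump_state.
by rewrite colv_state center_out subr0 mulmx0 addr0.
Qed.

Lemma readout_captured (q : 'I_N) : readout (state N.+1 (c q) q.+1) = f (c q).
Proof.
rewrite /readout; have -> : colv N (flag_jump (state N.+1 (c q) q.+1)) = delta_mx q 0.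
  apply/matrixP => i j; rewrite (ord1 j) !mxE flag_jump_state eqSS eqxx andbT.
  case: (eqVneq i q) => [->|i_neq_q]; first by rewrite eqxx.
  by rewrite ifF //; apply/negbTE; rewrite eq_sym; exact: i_neq_q.
rewrite colv_state center_out subr0 -colE.
by apply/matrixP => i j; rewrite (ord1 j) !mxE; ring.
Qed.

Fixpoint net (rem k : nat) : radnet R (k + n) m :=
  if rem is rem'.+1 then
    affine_layer (@hidden_map (k + n) k) (cutoff (inner k.+1) (threshold k.+1))
      (net rem' k.+1)
  else affine_layer (@out_map (k + n)) id (@RNil R m).

Lemma widths_net rem k :
  widths (net rem k) = (k + n) :: rcons (iota (k + n).+1 rem) m.
Proof.
elim: rem k => [|rem IH] k //=.
by have /= -> := IH k.+1.
Qed.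

Lemma radnet_ok_net rem k : radnet_ok (net rem k).
Proof.
elim: rem k => [|rem IH] k /=.
  by split => //; exact: piecewise_differentiable_id.
by split; [exact: piecewise_differentiable_cutoff | exact: IH].
Qed.

Lemma feedforward_net_state x rem k : (k + rem)%N = N ->
  feedforward (net rem k) (colv (k + n) (state k (anchor x k) (captured x k))) =
  readout (state N.+1 (anchor x N) (captured x N)).
Proof.
elim: rem k => [|rem IH] k kN.
  rewrite addn0 in kN; subst k.
  rewrite feedforward_affine_layer; last exact: out_map_affine.
  by rewrite radial_id out_map_state ?captured_le.
rewrite feedforward_affine_layer; last exact: hidden_map_affine.
rewrite hidden_map_state ?captured_le // cutoff_state.
by apply: IH; rewrite addSnnS.
Qed.

Lemma feedforward_net_free x : captured x N = 0 ->
  feedforward (net N 0) x = A *m x + b.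
Proof.
move=> x_free; have := feedforward_net_state x (erefl : (0 + N)%N = N).
rewrite /anchor x_free /= colv_state subr0 => ->; exact: readout_free.
Qed.

Lemma feedforward_net_captured x (q : 'I_N) : captured x N = q.+1 ->
  feedforward (net N 0) x = f (c q).
Proof.
move=> x_capt; have := feedforward_net_state x (erefl : (0 + N)%N = N).
rewrite /anchor x_capt center_ord /= colv_state subr0 => ->.
exact: readout_captured.
Qed.

Lemma captured_box x (q : 'I_N) : captured x N = q.+1 ->
  box n rho x /\ eball (c q) (r q) x.
Proof.
move=> x_capt; have := @captured_neq0 x N; rewrite x_capt center_ord radius_ord.
move=> /(_ isT) [/forallP c_inner x_ball]; split => // i.
have /andP[_ r_lt1] := r_range q.
have := coord_ltD1 i (lt_trans x_ball r_lt1).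
by have := c_inner i; rewrite center_ord; lra.
Qed.

Hypothesis box_cover : forall x, box n rho x -> exists q, eball (c q) (r q) x.

Lemma captured_free_box x : captured x N = 0 -> box n rho x ->
  exists i, rho - 2 < `|x i 0|.
Proof.
move=> x_free /box_cover [q x_ball].
have /captured_eq0 : (0 < q.+1 <= N)%N by rewrite ltn_ord.
move=> /(_ x x_free); rewrite center_ord radius_ord x_ball andbT.
move=> /forallPn [i]; rewrite -leNgt center_ord => c_outer; exists i.
have /andP[_ r_lt1] := r_range q.
move: x_ball; rewrite /eball /= enormB => /lt_trans/(_ r_lt1)/(coord_ltD1 i); lra.
Qed.

End Network.

Theorem theorem1 (R : realType) (n m : nat) (f : 'cV[R]_n -> 'cV[R]_m)
  (hf : asymptotically_affine f) (eps : R) (heps : 0 < eps) :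
  exists (K : set 'cV[R]_n) (N : nat) (F : 'cV[R]_n -> 'cV[R]_m),
    compact K /\ is_Ncover f K eps N /\
    (exists net : radnet R n m,
        radnet_ok net /\
        widths net = n :: rcons (iota n.+1 N) m /\
        F = feedforward net) /\
    (forall x, enorm (F x - f x) < eps).
Proof.
have [f_cont [L [[A [b LE]] Lf]]] := hf.
have [K0 [cK0 K0f]] := Lf eps heps.
have [M [_ K0M]] := compact_bounded cK0.
(* Points of [K0] have coordinates at most [M + 1]; the inner balls have radius
   below [1] and centres at least [1] inside the box. *)
pose rho := M + 3.
have [N NK] := is_Ncover_exists f_cont (box_compact n rho) heps.
have [[c [r [cr [cover cover_f]]]] _] := NK.
have r_range q : 0 < r q < 1 by have [] := cr q.
pose F := net c r A b f rho N 0.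
exists (box n rho), N, (feedforward F); split; first exact: box_compact.
split=> //; split.
  by exists F; split; [exact: radnet_ok_net | split=> //; exact: widths_net].
move=> x; case x_capt: (captured c r rho x N) => [|q].
  rewrite feedforward_net_free // -LE; apply: K0f => K0x.
  have x_small i : `|x i 0| <= M + 1.
    by apply: le_trans (ler_coord_mx_norm x i 0) (K0M (M + 1) _ x K0x); lra.
  have x_box : box n rho x by move=> i; have := x_small i; rewrite /rho; lra.
  have [i] := captured_free_box r_range cover x_capt x_box.
  by have := x_small i; rewrite /rho; lra.
have q_lt_N : (q < N)%N by rewrite -x_capt captured_le.
have x_capt' : captured c r rho x N = (Ordinal q_lt_N).+1 by [].
have [x_box x_ball] := captured_box r_range x_capt'.
by rewrite (feedforward_net_captured A b f r_range x_capt') enormB; exact: cover_f.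
Qed.
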